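(* Let $M$ and $M'$ be matchings of $X_{2k}$. Then $M$ and $M'$ are disjoint compatible if and only if there is a partition of $M$ into flippable sets whose convex hulls (of their endpoint sets) are pairwise disjoint, such that $M'$ is obtained from $M$ by flipping every set of this partition. Moreover, this partition is uniquely determined by $M$ and $M'$.
   Context: Let $k\ge 1$ and let $X_{2k}=\{P_1,\dots,P_{2k}\}$ be $2k$ points in convex position in the plane, labeled in clockwise cyclic order; indices are taken modulo $2k$. A matching of $X_{2k}$ means a set of $k$ pairwise non-crossing straight segments (edges) with endpoints in $X_{2k}$ covering every point exactly once. Two matchings $M,M'$ of $X_{2k}$ are disjoint compatible if they have no common edge and no edge of $M$ crosses an edge of $M'$. Flippable set: let $M$ be a matching and $N\subseteq M$ with $|N|=m\ge 2$; let $Y$ be the set of the $2m$ endpoints of edges of $N$, labeled $Q_1,\dots,Q_{2m}$ in the cyclic order inherited from $X_{2k}$ (for a suitable choice of $Q_1$). $N$ is a flippable set if $N=\{Q_1Q_2,Q_3Q_4,\dots,Q_{2m-1}Q_{2m}\}$ and the convex hull of $Y$ intersects no edge of $M\setminus N$. Flipping $N$ means replacing $N$ by $\{Q_2Q_3,Q_4Q_5,\dots,Q_{2m-2}Q_{2m-1},Q_{2m}Q_1\}$. *)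

(* Combinatorial model of 2k points in convex position:
   point i : 'I_n is P_{i+1}; the labels follow the clockwise cyclic order. *)
From mathcomp Require Import all_boot.
Set Implicit Arguments. Unset Strict Implicit. Unset Printing Implicit Defensive.

Section ConvexMatchings.
Variable n : nat.
Local Notation pt := 'I_n.
Local Notation edge := {set pt}.

(* The (closed) straight segments with endpoint sets e and f cross (have a
   common point) while having four distinct endpoints: for points in convex
   position, this happens iff the endpoints interleave in the cyclic order. *)
Definition crosses (e f : edge) : bool :=
  [exists a : pt, exists b : pt, exists c : pt, exists d : pt,
    [&& (val a < val c)%N, (val c < val b)%N, (val b < val d)%N &
        ((e == [set a; b]) && (f == [set c; d]))
        || ((e == [set c; d]) && (f == [set a; b]))]].

Definition matching (M : {set edge}) : bool :=
  [&& [forall e in M, #|e| == 2],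
      [forall x : pt, #|[set e in M | x \in e]| == 1] &
      [forall e in M, forall f in M, ~~ crosses e f]].

Definition disjoint_compatible (M M' : {set edge}) : bool :=
  [disjoint M & M'] && [forall e in M, forall f in M', ~~ crosses e f].

(* Q_1, ..., Q_{2m}: the points of Y in cyclic (clockwise) order, starting
   at q (the "suitable choice of Q_1"); Q_{j+1} = nth q (Qseq Y q) j. *)
Definition Qseq (Y : {set pt}) (q : pt) : seq pt :=
  rot (index q (enum Y)) (enum Y).

Definition pairs0 (N : {set edge}) (q : pt) : {set edge} :=
  let Qs := Qseq (cover N) q in
  [set [set nth q Qs i.*2; nth q Qs i.*2.+1] | i : 'I_#|N|].

Definition pairs1 (N : {set edge}) (q : pt) : {set edge} :=
  let Qs := Qseq (cover N) q in
  [set [set nth q Qs i.*2.+1; nth q Qs (i.*2.+2 %% size Qs)] | i : 'I_#|N|].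

(* The segment e meets the convex hull of Y (e's endpoints not in Y):
   for points in convex position, iff e separates two points of Y. *)
Definition hull_meets (e : edge) (Y : {set pt}) : bool :=
  [exists y1 in Y, exists y2 in Y, crosses e [set y1; y2]].

(* The convex hulls of two disjoint subsets Y1, Y2 of points in convex
   position are disjoint iff no chord of Y1 crosses a chord of Y2. *)
Definition hulls_disjoint (Y1 Y2 : {set pt}) : bool :=
  ~~ [exists a in Y1, exists b in Y1, exists c in Y2, exists d in Y2,
        crosses [set a; b] [set c; d]].

Definition flippable (M N : {set edge}) : bool :=
  [&& N \subset M, (1 < #|N|)%N,
      [exists q in cover N, N == pairs0 N q] &
      [forall e in M :\: N, ~~ hull_meets e (cover N)]].

(* Flipping N (well defined for a flippable set: any admissible Q_1 gives
   the same result). *)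
Definition flip (N : {set edge}) : {set edge} :=
  if [pick q in cover N | N == pairs0 N q] is Some q then pairs1 N q
  else set0.

Definition flip_partition (M M' : {set edge}) (P : {set {set edge}}) : Prop :=
  [/\ partition P M,
      forall N, N \in P -> flippable M N,
      forall N1 N2, N1 \in P -> N2 \in P -> N1 != N2 ->
        hulls_disjoint (cover N1) (cover N2)
    & M' = \bigcup_(N in P) flip N].

End ConvexMatchings.

(* Let m and m' send a point to its partner in M and in M'. The key
   step is a parity argument: the points strictly inside a chord {a, m a} are paired
   up by m, so m' sends both or neither of a, m a inside; hence the whole component
   of a under m and m' lies on one side of the chord, i.e. a and m a are cyclically
   consecutive within their component. Walking around a component, consecutive
   points are therefore joined alternately by M-edges and M'-edges: the M-edges of
   a component form a flippable set whose flip is the set of its M'-edges, and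
   non-crossing keeps the hulls of distinct components apart. Conversely, flipping
   joins consecutive points of a block, which creates neither a repeated nor a
   crossing edge. Finally the endpoints of a block are closed under m and m' and
   linked by them, so the blocks of any such partition are exactly the components. *)

From mathcomp Require Import all_boot zify.
Set Implicit Arguments. Unset Strict Implicit. Unset Printing Implicit Defensive.

Section Chords.
Variable n : nat.
Local Notation pt := 'I_n.

(* The two open arcs cut out of the circle by the chord [a b]. *)
Definition inside (a b y : pt) := (minn a b < y < maxn a b)%N.
Definition outside (a b y : pt) := (y < minn a b)%N || (maxn a b < y)%N.

Lemma insideC a b : inside a b =1 inside b a.
Proof. by move=> y; rewrite /inside minnC maxnC. Qed.

Lemma outsideC a b : outside a b =1 outside b a.
Proof. by move=> y; rewrite /outside minnC maxnC. Qed.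

Lemma inside_or_outside a b y : y != a -> y != b -> inside a b y || outside a b y.
Proof. by rewrite -!val_eqE /inside /outside /= => /eqP ? /eqP ?; lia. Qed.

Lemma inside_outsideF a b y : inside a b y -> outside a b y -> False.
Proof. by rewrite /inside /outside; lia. Qed.

Lemma inside_set2 a b y : y \in [set a; b] -> inside a b y = false.
Proof. by case/set2P => ->; rewrite /inside; lia. Qed.

Lemma outside_set2 a b y : y \in [set a; b] -> outside a b y = false.
Proof. by case/set2P => ->; rewrite /outside; lia. Qed.

Lemma set2_eqP (a b u w : pt) : [set a; b] = [set u; w] ->
  (a = u /\ b = w) \/ (a = w /\ b = u).
Proof.
move=> E.
have ha : a \in [set u; w] by rewrite -E set21.
have hb : b \in [set u; w] by rewrite -E set22.
have hu : u \in [set a; b] by rewrite E set21.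
have hw : w \in [set a; b] by rewrite E set22.
by case/set2P: ha => ?; case/set2P: hb => ?; case/set2P: hu => ?;
  case/set2P: hw => ?; subst; auto.
Qed.

Lemma inside_eq_set2 a b u w : [set a; b] = [set u; w] -> inside a b =1 inside u w.
Proof. by case/set2_eqP => -[-> ->] //; apply: insideC. Qed.

Lemma outside_eq_set2 a b u w : [set a; b] = [set u; w] -> outside a b =1 outside u w.
Proof. by case/set2_eqP => -[-> ->] //; apply: outsideC. Qed.

Lemma crossesC (e f : {set pt}) : crosses e f = crosses f e.
Proof.
by apply/idP/idP => /existsP[a /existsP[b /existsP[c /existsP[d /and4P[h1 h2 h3 H]]]]];
apply/existsP; exists a; apply/existsP; exists b;
apply/existsP; exists c; apply/existsP; exists d; rewrite h1 h2 h3 /=;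
case/orP: H => /andP[-> ->]; rewrite ?orbT.
Qed.

Lemma crosses_inside_outside a b c d : inside a b c -> outside a b d ->
  crosses [set a; b] [set c; d].
Proof.
have interleaved (u v w z : pt) : (u < w < v)%N -> (v < z)%N -> crosses [set u; v] [set w; z].
  move=> /andP[h1 h2] h3; apply/existsP; exists u; apply/existsP; exists v.
  by apply/existsP; exists w; apply/existsP; exists z; rewrite h1 h2 h3 !eqxx.
wlog ab : a b / (a <= b)%N.
  move=> W; case: (leqP a b) => [|/ltnW]; first exact: W.
  by rewrite insideC outsideC setUC; apply: W.
rewrite /inside /outside (minn_idPl ab) (maxn_idPr ab) => I /orP[] O.
  by rewrite crossesC [[set c; d]]setUC; apply: interleaved; lia.
exact: interleaved.
Qed.

Lemma crossesE (e f : {set pt}) : crosses e f -> exists a b c d,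
  [/\ e = [set a; b], f = [set c; d], inside a b c & outside a b d].
Proof.
move=> /existsP[a /existsP[b /existsP[c /existsP[d /and4P[ac cb bd]]]]].
rewrite /= in ac cb bd; case/orP => /andP[/eqP -> /eqP ->].
- by exists a, b, c, d; split; rewrite // /inside /outside; lia.
- exists c, d, b, a; split => //; first by rewrite setUC.
  all: rewrite /inside /outside; lia.
Qed.

Lemma noncrossing_inside a b y z : inside a b y -> z != a -> z != b ->
  ~~ crosses [set a; b] [set y; z] -> inside a b z.
Proof.
move=> Iy za zb nc; case/orP: (inside_or_outside za zb) => // Oz.
by rewrite (crosses_inside_outside Iy Oz) in nc.
Qed.

Lemma noncrossing_outside a b y z : outside a b y -> z != a -> z != b ->
  ~~ crosses [set a; b] [set y; z] -> outside a b z.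
Proof.
move=> Oy za zb nc; case/orP: (inside_or_outside za zb) => // Iz.
by rewrite [[set y; z]]setUC (crosses_inside_outside Iz Oy) in nc.
Qed.

End Chords.

Lemma next_nth_mod (T : eqType) (s : seq T) x0 j : uniq s -> (j < size s)%N ->
  next s (nth x0 s j) = nth x0 s (j.+1 %% size s).
Proof.
case: s => [|y s] // Us hj.
rewrite next_nth (mem_nth _ hj) (index_uniq _ hj Us) /=.
move: hj; rewrite /= ltnS leq_eqVlt => /orP[/eqP ->|hj].
- by rewrite modnn /= nth_default.
- by rewrite modn_small //= (set_nth_default x0).
Qed.

Section ConsecutivePoints.
Variables (n : nat) (Y : {set 'I_n}).
Local Notation s := (enum Y).
Local Notation rank y := (index y (enum Y)).

Lemma sorted_enum_set : sorted (fun u v : 'I_n => u < v)%N s.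
Proof.
rewrite /enum_mem -enumT; apply: sorted_filter; first exact: ltn_trans.
by have := iota_ltn_sorted 0 n; rewrite -val_enum_ord sorted_map.
Qed.

Lemma ltn_rank y z : y \in Y -> z \in Y -> (y < z)%N = (rank y < rank z)%N.
Proof.
move=> yY zY; have {yY zY} [yY zY] : y \in s /\ z \in s by rewrite !mem_enum.
have lt_of_rank := sorted_ltn_index (fun y x z : 'I_n => @ltn_trans y x z) sorted_enum_set.
apply/idP/idP => [yz|]; last exact: lt_of_rank.
rewrite ltnNge leq_eqVlt negb_or; apply/andP; split.
  by apply: contraTN yz => /eqP/(index_inj y zY yY) ->; rewrite ltnn.
by apply: contraTN yz => /(lt_of_rank _ _ zY yY) zy; rewrite -leqNgt ltnW.
Qed.

Lemma rank_lt y : y \in Y -> (rank y < #|Y|)%N.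
Proof. by rewrite cardE index_mem mem_enum. Qed.

Lemma nth_rank_mem x0 k : (k < #|Y|)%N -> nth x0 s k \in Y /\ rank (nth x0 s k) = k.
Proof.
rewrite cardE => hk; split; last exact: index_uniq (enum_uniq _).
by have := mem_nth x0 hk; rewrite mem_enum.
Qed.

Lemma rank_inj y z : y \in Y -> z \in Y -> rank y = rank z -> y = z.
Proof. by move=> yY zY; apply: (index_inj y); rewrite mem_enum. Qed.

Lemma rank_next a : a \in Y ->
  next s a \in Y /\ rank (next s a) = (rank a).+1 %% #|Y|.
Proof.
move=> aY; have ha := rank_lt aY.
suff -> : next s a = nth a s ((rank a).+1 %% #|Y|).
  by apply: nth_rank_mem; rewrite ltn_mod; case: #|Y| ha.
have as_ : a \in s by rewrite mem_enum.
rewrite -{1}(nth_index a as_) next_nth_mod -?cardE //.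
exact: enum_uniq.
Qed.

Definition oneside (a b : 'I_n) :=
  [forall y in Y, ~~ inside a b y] || [forall y in Y, ~~ outside a b y].

Lemma onesideC a b : oneside a b = oneside b a.
Proof.
by rewrite /oneside; congr (_ || _); apply: eq_forallb => y; rewrite (insideC, outsideC).
Qed.

Lemma oneside_next a : a \in Y -> oneside a (next s a).
Proof.
move=> aY; case: (rank_next aY) => bY; set b := next s a => rb.
have ra := rank_lt aY.
case: (ltnP (rank a).+1 #|Y|) => last_a; apply/orP; [left | right];
  apply/forall_inP => y yY; have ry := rank_lt yY.
- have ab : (a < b)%N by rewrite ltn_rank // rb modn_small //.
  rewrite /inside (minn_idPl (ltnW ab)) (maxn_idPr (ltnW ab)) !ltn_rank //.
  by rewrite rb modn_small //; lia.
- have rb0 : rank b = 0 by rewrite rb (_ : (rank a).+1 = #|Y|) ?modnn //; lia.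
  have ba : (b <= a)%N by rewrite leqNgt ltn_rank // rb0.
  by rewrite /outside (minn_idPr ba) (maxn_idPl ba) !ltn_rank // rb0; lia.
Qed.

Lemma oneside_consecutive a b : a \in Y -> b \in Y -> a != b ->
  oneside a b -> next s a = b \/ next s b = a.
Proof.
wlog ab : a b / (a < b)%N.
  move=> W aY bY nab os; case: (ltngtP a b) => [ab|ba|/val_inj E]; first exact: W.
  - by rewrite onesideC in os; case: (W b a ba bY aY _ os); auto; rewrite eq_sym.
  - by rewrite E eqxx in nab.
move=> aY bY _; rewrite /oneside /inside /outside (minn_idPl (ltnW ab)) (maxn_idPr (ltnW ab)).
have rab : (rank a < rank b)%N by rewrite -ltn_rank.
have [rb ra] := (rank_lt bY, rank_lt aY).
have [nY rn] := rank_next aY; have [nY' rn'] := rank_next bY.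
case/orP => /forall_inP side.
- left; apply: rank_inj => //; rewrite rn modn_small; last by lia.
  case: (ltngtP (rank a).+1 (rank b)) => [gap|?|//]; last by lia.
  have [yY ry] := nth_rank_mem a (ltn_trans gap rb).
  by case/negP: (side _ yY); rewrite !ltn_rank // ry ltnSn gap.
- right; apply: rank_inj => //; rewrite rn'.
  have ra0 : rank a = 0.
    case: (posnP (rank a)) => // pos.
    have [yY ry] := nth_rank_mem a (leq_ltn_trans (leq0n _) ra).
    by case/negP: (side _ yY); rewrite !ltn_rank // ry pos.
  case: (ltngtP (rank b).+1 #|Y|) => [gap|?|->]; [|lia|by rewrite modnn].
  have [yY ry] := nth_rank_mem a gap.
  by case/negP: (side _ yY); rewrite !ltn_rank // ry ltnSn orbT.
Qed.

End ConsecutivePoints.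

Definition mate n (M : {set {set 'I_n}}) (x : 'I_n) : 'I_n :=
  odflt x [pick y | [set x; y] \in M].

Section Mate.
Variables (n : nat) (M : {set {set 'I_n}}).
Hypothesis hM : matching M.

Lemma matching_card2 e : e \in M -> #|e| = 2.
Proof. by case/and3P: hM => /forall_inP H _ _ /H /eqP. Qed.

Lemma matching_noncrossing e f : e \in M -> f \in M -> ~~ crosses e f.
Proof. by case/and3P: hM => _ _ /forall_inP H /H /forall_inP; apply. Qed.

Lemma matching_uniq e f x : e \in M -> f \in M -> x \in e -> x \in f -> e = f.
Proof.
move=> eM fM xe xf; case/and3P: hM => _ /forallP /(_ x) /cards1P [e0 E] _.
have : e \in [set e in M | x \in e] by rewrite inE eM xe.
have : f \in [set e in M | x \in e] by rewrite inE fM xf.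
by rewrite E !inE => /eqP -> /eqP ->.
Qed.

Lemma mate_edge x : [set x; mate M x] \in M.
Proof.
have [y hy] : exists y, [set x; y] \in M.
  case/and3P: hM => _ /forallP /(_ x) /cards1P [e E] _.
  have : e \in [set e in M | x \in e] by rewrite E set11.
  rewrite inE => /andP[eM xe]; move/cards2P: (introT eqP (matching_card2 eM)).
  case=> u [v [_ Ee]]; move: xe eM; rewrite Ee => /set2P [->|->] eM; first by exists v.
  by exists u; rewrite setUC.
by rewrite /mate; case: pickP => [z /= -> //|/(_ y)]; rewrite hy.
Qed.

Lemma mate_neq x : mate M x != x.
Proof.
by apply/eqP => E; have := matching_card2 (mate_edge x); rewrite E setUid cards1.
Qed.

Lemma edge_mate e x : e \in M -> x \in e -> e = [set x; mate M x].
Proof. by move=> eM xe; apply: matching_uniq eM (mate_edge x) xe (set21 _ _). Qed.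

Lemma matching_edgeP e : e \in M -> exists2 x, x \in e & e = [set x; mate M x].
Proof.
move=> eM; have /cards2P [x [y [_ Ee]]] : #|e| == 2 by rewrite matching_card2.
have xe : x \in e by rewrite Ee set21.
by exists x => //; apply: edge_mate.
Qed.

Lemma mateK : involutive (mate M).
Proof.
move=> x; have E := edge_mate (mate_edge x) (set22 x (mate M x)).
have : mate M (mate M x) \in [set x; mate M x] by rewrite E set22.
by case/set2P => // E2; move: (mate_neq (mate M x)); rewrite E2 eqxx.
Qed.

Lemma mate_in e x : e \in M -> x \in e -> mate M x \in e.
Proof. by move=> eM xe; rewrite (edge_mate eM xe) set22. Qed.

Lemma mate_set2 x y : [set x; y] \in M -> mate M x = y.
Proof.
move=> eM; case/set2P: (mate_in eM (set21 x y)) => // E.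
by move: (mate_neq x); rewrite E eqxx.
Qed.

End Mate.

Lemma involution_closed_card_even (T : finType) (h : T -> T) (S : {set T}) :
  involutive h -> (forall x, h x != x) -> {in S, forall x, h x \in S} ->
  ~~ odd #|S|.
Proof.
move=> hK hN; elim: {S}_.+1 {-2}S (ltnSn #|S|) => // c IH S hc hS.
case: (set_0Vmem S) => [->|[x xS]]; first by rewrite cards0.
have hxS : h x \in S :\ x by rewrite !inE hN hS.
have cardS : #|S| = #|S :\ x :\ h x|.+2.
  by rewrite (cardsD1 x S) xS (cardsD1 (h x) (S :\ x)) hxS.
rewrite cardS /= negbK; apply: IH; first by rewrite cardS in hc; lia.
move=> y; rewrite !inE => /and3P[yhx yx yS].
rewrite hS // andbT (inj_eq (can_inj hK)) yx /=.
by apply: contra yhx => /eqP <-; rewrite hK.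
Qed.

Section TwoInvolutions.
Variables (n : nat) (f g : 'I_n -> 'I_n).
Local Notation pt := 'I_n.

Definition adj2 : rel pt := fun x y => (y == f x) || (y == g x).
Definition component x : {set pt} := [set y | connect adj2 x y].

Hypotheses (fK : involutive f) (gK : involutive g).

Lemma adj2_sym : symmetric adj2.
Proof.
move=> x y; rewrite /adj2.
have flip_eq (h : pt -> pt) : involutive h -> (y == h x) = (x == h y).
  by move=> hK; apply/eqP/eqP => ->; rewrite hK.
by rewrite (flip_eq f fK) (flip_eq g gK).
Qed.

Lemma component_refl x : x \in component x.
Proof. by rewrite inE connect0. Qed.

Lemma component_f x y : y \in component x -> f y \in component x.
Proof. by rewrite !inE => /connect_trans; apply; apply: connect1; rewrite /adj2 eqxx. Qed.

Lemma component_g x y : y \in component x -> g y \in component x.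
Proof. by rewrite !inE => /connect_trans; apply; apply: connect1; rewrite /adj2 eqxx orbT. Qed.

Lemma component_eq x y : y \in component x -> component y = component x.
Proof.
rewrite inE => xy; apply/setP => z; rewrite !inE.
apply/idP/idP; first exact: connect_trans.
by apply: connect_trans; rewrite (sym_connect_sym adj2_sym).
Qed.

Lemma component_sub (S : {set pt}) x : x \in S ->
  (forall y, y \in S -> y \in component x -> f y \in S /\ g y \in S) ->
  component x \subset S.
Proof.
move=> xS H; apply/subsetP => y; rewrite inE => /connectP [p xp ->] {y}.
suff : forall z, z \in S -> z \in component x -> path adj2 z p -> last z p \in S.
  by apply; rewrite ?component_refl.
elim: p {xp} => [|v p IH] z zS zx //= /andP[zv vp].
have vx : v \in component x.
  by case/orP: zv => /eqP ->; [apply: component_f | apply: component_g].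
have vS : v \in S by case/orP: zv => /eqP ->; case: (H z zS zx).
exact: IH.
Qed.

Lemma component_avoid (S : pred pt) x : ~~ S x ->
  (forall y, y \in component x -> S y -> S (f y) && S (g y)) ->
  forall y, y \in component x -> ~~ S y.
Proof.
move=> Sx H y yx; apply: contra Sx => Sy.
have : component y \subset [set z | S z].
  apply: component_sub => [|z]; first by rewrite inE.
  rewrite inE (component_eq yx) => Sz zx.
  by case/andP: (H z zx Sz); rewrite !inE => -> ->.
have xy : x \in component y by rewrite (component_eq yx) component_refl.
by move/subsetP/(_ x xy); rewrite inE.
Qed.

Lemma component_crossing_chord x (e : {set pt}) a b :
  (forall z, z \in e -> z \notin component x) ->
  a \in component x -> b \in component x -> crosses e [set a; b] ->
  exists2 y, y \in component x & crosses e [set y; f y] || crosses e [set y; g y].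
Proof.
move=> eY aY bY /crossesE [c [d [a' [b' [Ee Eab Ia Ob]]]]].
have [a'Y b'Y] : a' \in component x /\ b' \in component x.
  by have := set21 a' b'; have := set22 a' b'; rewrite -Eab => /set2P[]-> /set2P[]->.
have off_cd z : z \in component x -> z != c /\ z != d.
  by move=> zY; split; apply: contraTneq zY => ->; rewrite eY // Ee !inE eqxx ?orbT.
apply/exists_inP; apply: contraT => H.
have noncross y : y \in component x -> ~~ crosses e [set y; f y] && ~~ crosses e [set y; g y].
  by move=> yY; rewrite -negb_or; apply: contra H => hc; apply/exists_inP; exists y.
have b'a' : b' \in component a' by rewrite (component_eq a'Y).
have := component_avoid (S := outside c d) _ _ b'a'; rewrite Ob; apply.
  by apply/negP => /(inside_outsideF Ia).
move=> y; rewrite (component_eq a'Y) => yY Oy; case/andP: (noncross y yY).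
have [fc fd] := off_cd _ (component_f yY); have [gc gd] := off_cd _ (component_g yY).
by rewrite Ee => ncf ncg; rewrite (noncrossing_outside Oy fc fd) ?(noncrossing_outside Oy gc gd).
Qed.

Hypotheses (fN : forall x, f x != x) (gN : forall x, g x != x).
Hypotheses (ncff : forall x y, ~~ crosses [set x; f x] [set y; f y])
  (ncfg : forall x y, ~~ crosses [set x; f x] [set y; g y]).

Section FChord.
Variable a : pt.
Local Notation b := (f a).

Lemma mem_f_chord y : (f y \in [set a; b]) = (y \in [set a; b]).
Proof. by rewrite !inE -{1}(fK a) !(can_eq fK) orbC. Qed.

Lemma inside_f y : inside a b y -> inside a b (f y).
Proof.
move=> Iy; have : f y \notin [set a; b].
  by rewrite mem_f_chord; apply: contraTN Iy => /inside_set2 ->.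
by rewrite !inE negb_or => /andP[h1 h2]; apply: noncrossing_inside Iy h1 h2 (ncff a y).
Qed.

Lemma outside_f y : outside a b y -> outside a b (f y).
Proof.
move=> Oy; have : f y \notin [set a; b].
  by rewrite mem_f_chord; apply: contraTN Oy => /outside_set2 ->.
by rewrite !inE negb_or => /andP[h1 h2]; apply: noncrossing_outside Oy h1 h2 (ncff a y).
Qed.

(* Parity: the points inside the chord are paired up by [f]; if [g] sent exactly
   one endpoint u inside, then u together with the inside points would be a set
   of odd size closed under [g]. *)
Lemma inside_g_chord : inside a b (g a) = inside a b (g b).
Proof.
have I_even : ~~ odd #|[set y | inside a b y]|.
  by apply: (involution_closed_card_even fK fN) => y; rewrite !inE; apply: inside_f.
have step u : u \in [set a; b] -> inside a b (g u) -> inside a b (g (f u)).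
  move=> uab Igu; apply: contraT => NIgfu.
  have Eab : [set a; b] = [set u; f u] by case/set2P: uab => -> //; rewrite fK setUC.
  have uI : u \notin [set y | inside a b y] by rewrite inE inside_set2.
  have : ~~ odd #|u |: [set y | inside a b y]|.
    apply: (involution_closed_card_even gK gN) => y; rewrite !inE.
    case/orP => [/eqP -> | Iy]; first by rewrite Igu orbT.
    case: (g y =P u) => [// | /eqP gyu] /=.
    have gyfu : g y != f u by apply: contraNneq NIgfu => <-; rewrite gK.
    have : g y \notin [set a; b] by rewrite Eab !inE negb_or gyu.
    rewrite !inE negb_or => /andP[h1 h2].
    exact: noncrossing_inside Iy h1 h2 (ncfg a y).
  by rewrite cardsU1 uI add1n /= negbK (negbTE I_even).
apply/idP/idP; first exact: step (set21 a b).
by have := step b (set22 a b); rewrite fK.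
Qed.

Lemma oneside_component : oneside (component a) a b.
Proof.
have g_off_chord y (P : pred pt) : P y -> ~~ P (g a) -> ~~ P (g b) -> g y != a /\ g y != b.
  by move=> Py Pga Pgb; split; [apply: contraNneq Pga | apply: contraNneq Pgb];
    move=> <-; rewrite gK.
rewrite /oneside; case Iga: (inside a b (g a)); apply/orP; [right | left]; apply/forall_inP.
- have NO u : inside a b u -> ~~ outside a b u by move=> Iu; apply/negP/(inside_outsideF Iu).
  apply: component_avoid => [|y _ Oy]; first by rewrite outside_set2 ?set21.
  have [] := g_off_chord y (outside a b) Oy (NO _ Iga) (NO _ _); first by rewrite -inside_g_chord.
  by move=> h1 h2; rewrite outside_f // (noncrossing_outside Oy h1 h2 (ncfg a y)).
- apply: component_avoid => [|y _ Iy]; first by rewrite inside_set2 ?set21.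
  have [] := g_off_chord y (inside a b) Iy (negbT Iga) _; first by rewrite -inside_g_chord Iga.
  by move=> h1 h2; rewrite inside_f // (noncrossing_inside Iy h1 h2 (ncfg a y)).
Qed.

End FChord.

Lemma component_next x y : y \in component x ->
  next (enum (component x)) y = f y \/ next (enum (component x)) (f y) = y.
Proof.
move=> yY; have := oneside_component y; rewrite (component_eq yY) => os.
by apply: oneside_consecutive os; rewrite ?component_f // eq_sym fN.
Qed.

End TwoInvolutions.

Lemma component_swap n (f g : 'I_n -> 'I_n) x : component f g x = component g f x.
Proof. by apply/setP => y; rewrite !inE; apply: eq_connect => u v; rewrite /adj2 orbC. Qed.

Section Qseq.
Variables (n : nat) (Y : {set 'I_n}) (q : 'I_n).
Local Notation t := (Qseq Y q).

Lemma Qseq_uniq : uniq t.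
Proof. by rewrite rot_uniq enum_uniq. Qed.

Lemma size_Qseq : size t = #|Y|.
Proof. by rewrite size_rot cardE. Qed.

Lemma mem_Qseq y : (y \in t) = (y \in Y).
Proof. by rewrite mem_rot mem_enum. Qed.

Lemma next_Qseq : next t =1 next (enum Y).
Proof. exact/next_rot/enum_uniq. Qed.

Lemma nth_Qseq0 : q \in Y -> nth q t 0 = q.
Proof.
rewrite -mem_enum => qY; have hi : (index q (enum Y) < size (enum Y))%N by rewrite index_mem.
by rewrite /Qseq /rot nth_cat size_drop subn_gt0 hi nth_drop addn0 nth_index.
Qed.

Lemma mem_nth_Qseq j : (j < #|Y|)%N -> nth q t j \in Y.
Proof. by move=> hj; rewrite -mem_Qseq mem_nth // size_Qseq. Qed.

Lemma next_Qseq_nth j : (j < #|Y|)%N -> next t (nth q t j) = nth q t (j.+1 %% #|Y|).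
Proof. by move=> hj; rewrite next_nth_mod ?Qseq_uniq ?size_Qseq. Qed.

End Qseq.

Lemma next_chord_noncrossing n (Y : {set 'I_n}) u c d : u \in Y -> c \in Y -> d \in Y ->
  ~~ crosses [set u; next (enum Y) u] [set c; d].
Proof.
move=> uY cY dY; apply/negP => /crossesE [a [b [c' [d' [E1 E2 I O]]]]].
have [c'Y d'Y] : c' \in Y /\ d' \in Y.
  by have := set21 c' d'; have := set22 c' d'; rewrite -E2 => /set2P[]-> /set2P[]->.
case/orP: (oneside_next uY) => /forall_inP H.
- by move: (H _ c'Y); rewrite (inside_eq_set2 E1) I.
- by move: (H _ d'Y); rewrite (outside_eq_set2 E1) O.
Qed.

Lemma ltn_double_split j k : (j < k.*2)%N -> exists2 i, (i < k)%N & j = i.*2 \/ j = i.*2.+1.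
Proof. by move=> hj; exists j./2; have := odd_double_half j; case: (odd j) => /= E; lia. Qed.

Section Pairs.
Variables (n : nat) (N : {set {set 'I_n}}) (q : 'I_n).
Local Notation t := (Qseq (cover N) q).
Hypothesis hsz : #|cover N| = #|N|.*2.

Lemma nth_Qseq_pair i : (i < #|N|)%N ->
  (i.*2.+1 < #|cover N|)%N /\ nth q t i.*2.+1 = next t (nth q t i.*2).
Proof.
move=> hi; have h1 : (i.*2.+1 < #|cover N|)%N by rewrite hsz; lia.
by rewrite next_Qseq_nth ?modn_small //; lia.
Qed.

Lemma mem_pairs0 e : e \in pairs0 N q -> exists2 i, (i < #|N|)%N &
  e = [set nth q t i.*2; next t (nth q t i.*2)].
Proof.
by case/imsetP => i _ ->; exists i => //; case: (nth_Qseq_pair (ltn_ord i)) => _ ->.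
Qed.

Lemma mem_pairs1 e : e \in pairs1 N q -> exists2 i, (i < #|N|)%N &
  e = [set nth q t i.*2.+1; next t (nth q t i.*2.+1)].
Proof.
case/imsetP => i _ ->; exists i => //.
by case: (nth_Qseq_pair (ltn_ord i)) => h1 _; rewrite next_Qseq_nth // size_Qseq.
Qed.

Lemma pairs0_pairs1_disjoint : (1 < #|N|)%N -> [disjoint pairs0 N q & pairs1 N q].
Proof.
move=> N2; rewrite -setI_eq0; apply/set0Pn => -[e]; rewrite inE.
case/andP => /imsetP [[j hj] _ ->] /imsetP [[i hi] _] /=.
have nth_eq k l : (k < size t)%N -> (l < size t)%N -> nth q t k = nth q t l -> k = l.
  by move=> hk hl /eqP; rewrite nth_uniq ?Qseq_uniq // => /eqP.
rewrite size_Qseq hsz in nth_eq *.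
move: #|N| N2 nth_eq hi hj => k k_gt1 nth_eq hi hj.
case/set2_eqP => -[E E'].
  have : j.*2 = i.*2.+1 by apply: nth_eq E; lia.
  lia.
have ij : j.*2.+1 = i.*2.+1 by apply: nth_eq E'; lia.
have : j.*2 = i.*2.+2 %% k.*2 by apply: nth_eq E; rewrite ?ltn_mod; lia.
case: (ltngtP i.*2.+2 k.*2) => [lt|gt|E2]; [rewrite modn_small // | lia | rewrite E2 modnn]; lia.
Qed.

End Pairs.

Lemma flippable_pairs n (M N : {set {set 'I_n}}) : flippable M N ->
  exists q, [/\ q \in cover N, N = pairs0 N q & flip N = pairs1 N q].
Proof.
case/and4P => _ _ /exists_inP [q0 q0Y /eqP E0] _.
rewrite /flip; case: pickP => [q /andP[qY /eqP E]|H]; first by exists q.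
by move: (H q0); rewrite q0Y -E0 eqxx.
Qed.

Section Blocks.
Variables (n : nat) (M : {set {set 'I_n}}).
Hypothesis hM : matching M.

Lemma card_cover_sub (N : {set {set 'I_n}}) : N \subset M -> #|cover N| = #|N|.*2.
Proof.
move=> /subsetP NM.
have tN : trivIset N.
  apply/trivIsetP => A B AN BN; apply: contraNT; rewrite -setI_eq0 => /set0Pn [z].
  by rewrite inE => /andP[zA zB]; rewrite (matching_uniq hM (NM _ AN) (NM _ BN) zA zB).
rewrite -(eqP tN) -muln2 -sum_nat_const; apply: eq_bigr => e eN.
exact: (matching_card2 hM (NM _ eN)).
Qed.

Lemma partition_block_eq (P : {set {set {set 'I_n}}}) N N' z : partition P M ->
  N \in P -> N' \in P -> z \in cover N -> z \in cover N' -> N = N'.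
Proof.
case/and3P => /eqP covP tP _ NP N'P /bigcupP [e eN ze] /bigcupP [e' e'N ze'].
have eM : e \in M by rewrite -covP; apply/bigcupP; exists N.
have e'M : e' \in M by rewrite -covP; apply/bigcupP; exists N'.
move: e'N; rewrite -(matching_uniq hM eM e'M ze ze') => e'N.
apply: contraTeq tP => NN'; apply/trivIsetP => /(_ _ _ NP N'P NN').
by rewrite -setI_eq0 => /set0Pn; apply; exists e; rewrite inE eN.
Qed.

Lemma partition_blockE (P : {set {set {set 'I_n}}}) N : partition P M -> N \in P ->
  N = [set e in M | e \subset cover N].
Proof.
move=> hP NP; have /and3P [/eqP covP _ _] := hP.
apply/setP => e; rewrite inE; apply/idP/andP => [eN | [eM eN]].
  by split; [rewrite -covP; apply/bigcupP; exists N | apply: bigcup_sup].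
have [z ze _] := matching_edgeP hM eM.
move: eM; rewrite -covP => /bigcupP [N2 N2P eN2].
by rewrite (partition_block_eq hP NP N2P (subsetP eN _ ze)) //; apply/bigcupP; exists e.
Qed.

End Blocks.

Section FlipPartition.
Variables (n : nat) (M M' : {set {set 'I_n}}) (P : {set {set {set 'I_n}}}).
Hypotheses (hM : matching M) (hFP : flip_partition M M' P).

Lemma flip_partition_block N : N \in P -> exists q, [/\ q \in cover N, N = pairs0 N q,
  flip N = pairs1 N q, N \subset M & (1 < #|N|)%N /\ #|cover N| = #|N|.*2].
Proof.
case: hFP => _ hfl _ _ NP; have /and4P [NM N2 _ _] := hfl N NP.
have [q [qY E0 E1]] := flippable_pairs (hfl N NP).
by exists q; split => //; split; last exact: (card_cover_sub hM NM).
Qed.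

Lemma flip_partition_edge f : f \in M' -> exists2 N, N \in P & f \in flip N.
Proof. by case: hFP => _ _ _ ->; case/bigcupP => N NP fN; exists N. Qed.

Lemma flip_edge_chord N f : N \in P -> f \in flip N ->
  exists2 v, v \in cover N & f = [set v; next (enum (cover N)) v].
Proof.
move=> NP; have [q [qY E0 -> NM [_ hsz]]] := flip_partition_block NP.
case/(mem_pairs1 hsz) => i hi ->; exists (nth q (Qseq (cover N) q) i.*2.+1).
  by apply: mem_nth_Qseq; case: (nth_Qseq_pair q hsz hi).
by rewrite next_Qseq.
Qed.

Lemma flip_partition_disjoint : [disjoint M & M'].
Proof.
rewrite -setI_eq0; apply/set0Pn => -[f]; rewrite inE => /andP[fM fM'].
have [N NP fN] := flip_partition_edge fM'.
have [q [qY E0 E1 NM [N2 hsz]]] := flip_partition_block NP.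
have [v vY Ef] := flip_edge_chord NP fN.
have [e eN ve] := bigcupP vY.
have fN' : f \in N by rewrite (matching_uniq hM fM (subsetP NM _ eN) _ ve) // Ef set21.
have := pairs0_pairs1_disjoint q hsz N2; rewrite -setI_eq0 -E0 -E1 => /eqP/setP/(_ f).
by rewrite !inE fN' fN.
Qed.

Lemma flip_partition_noncrossing e f : e \in M -> f \in M' -> ~~ crosses e f.
Proof.
move=> eM fM'; have [hP hfl _ _] := hFP; have /and3P [/eqP covP _ _] := hP.
have [N NP fN] := flip_partition_edge fM'.
have [v vY ->] := flip_edge_chord NP fN.
have nvY : next (enum (cover N)) v \in cover N by rewrite -mem_enum mem_next mem_enum.
move: (eM); rewrite -covP => /bigcupP [N2 N2P eN2].
have [EN | NN2] := eqVneq N N2.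
  rewrite -{}EN in eN2.
  have [q [qY E0 _ _ [_ hsz]]] := flip_partition_block NP.
  move: eN2; rewrite {1}E0 => /(mem_pairs0 hsz) [j hj ->].
  rewrite next_Qseq; apply: next_chord_noncrossing => //.
  by apply: mem_nth_Qseq; rewrite hsz; lia.
have eN : e \notin N.
  apply: contra NN2 => eN; have [z ze _] := matching_edgeP hM eM.
  by apply/eqP/(partition_block_eq hM hP NP N2P (z := z)); apply/bigcupP; exists e.
case/and4P: (hfl N NP) => _ _ _ /forall_inP /(_ e); rewrite inE eN eM => /(_ isT).
apply: contra => hc; apply/exists_inP; exists v => //.
by apply/exists_inP; exists (next (enum (cover N)) v).
Qed.

Lemma flip_partition_disjoint_compatible : disjoint_compatible M M'.
Proof.
apply/andP; split; first exact: flip_partition_disjoint.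
by apply/forall_inP => e eM; apply/forall_inP => f fM'; apply: flip_partition_noncrossing.
Qed.

End FlipPartition.

Section DisjointCompatible.
Variables (n : nat) (M M' : {set {set 'I_n}}).
Hypotheses (hM : matching M) (hM' : matching M') (hdc : disjoint_compatible M M').
Local Notation pt := 'I_n.
Local Notation m := (mate M).
Local Notation m' := (mate M').
Local Notation Y x := (component m m' x).

Lemma mate_neq_mate x : m x != m' x.
Proof.
apply/eqP => E; case/andP: hdc => /disjoint_setI0/setP/(_ [set x; m x]).
by rewrite !inE {2}E !mate_edge.
Qed.

Lemma edges_noncrossing e f : (e \in M) || (e \in M') -> (f \in M) || (f \in M') ->
  ~~ crosses e f.
Proof.
have ncMM' e1 f1 : e1 \in M -> f1 \in M' -> ~~ crosses e1 f1.
  by move=> eM fM'; case/andP: hdc => _ /forall_inP /(_ _ eM) /forall_inP; apply.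
case/orP => he; case/orP => hf.
- exact: (matching_noncrossing hM he hf).
- exact: ncMM'.
- by rewrite crossesC; apply: ncMM'.
- exact: (matching_noncrossing hM' he hf).
Qed.

Let mK := mateK hM.
Let m'K := mateK hM'.

Lemma component_next_mate x y : y \in Y x ->
  next (enum (Y x)) y = m y \/ next (enum (Y x)) (m y) = y.
Proof.
apply: (component_next mK m'K (mate_neq hM) (mate_neq hM'));
  by move=> u v; apply: edges_noncrossing; rewrite !mate_edge ?orbT.
Qed.

Lemma component_next_mate' x y : y \in Y x ->
  next (enum (Y x)) y = m' y \/ next (enum (Y x)) (m' y) = y.
Proof.
rewrite component_swap; apply: (component_next m'K mK (mate_neq hM') (mate_neq hM));
  by move=> u v; apply: edges_noncrossing; rewrite !mate_edge ?orbT.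
Qed.

Definition component_block x := [set e in M | e \subset Y x].
Local Notation B x := (component_block x).

Lemma mate_mem_block x y : y \in Y x -> [set y; m y] \in B x.
Proof.
move=> yY; rewrite inE mate_edge //; apply/subsetP => z /set2P [->|->] //.
exact: component_f.
Qed.

Lemma cover_block x : cover (B x) = Y x.
Proof.
apply/setP => y; apply/bigcupP/idP => [[e] | yY].
  by rewrite inE => /andP[_ /subsetP H] /H.
by exists [set y; m y]; [apply: mate_mem_block | apply: set21].
Qed.

Lemma block_sub x : B x \subset M.
Proof. by apply/subsetP => e; rewrite inE => /andP[]. Qed.

Lemma card_component x : #|Y x| = #|B x|.*2.
Proof. by rewrite -cover_block; apply: (card_cover_sub hM (block_sub x)). Qed.

Lemma card_block_gt1 x : (1 < #|B x|)%N.
Proof.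
have xY := component_refl m m' x.
have sub : [set x; m x] \proper Y x.
  apply/properP; split.
    by apply/subsetP => z /set2P[] ->; [exact: xY | exact: component_f].
  exists (m' x); first exact: component_g.
  by rewrite !inE negb_or (mate_neq hM') eq_sym mate_neq_mate.
by have := proper_card sub; rewrite cards2 eq_sym (mate_neq hM) card_component; lia.
Qed.

Section Alternating.
Variables (x q : pt).
Hypothesis qY : q \in Y x.
Local Notation t := (Qseq (Y x) q).
Hypothesis hq : m q = next t q.

Lemma alternating j : (j < #|Y x|)%N ->
  (if odd j then m' else m) (nth q t j) = next t (nth q t j).
Proof.
elim: j => [|j IH] hj; first by rewrite /= nth_Qseq0.
have next_inj := can_inj (prev_next (Qseq_uniq (Y x) q)).
have nxt : next t =1 next (enum (Y x)) := next_Qseq (Y x) q.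
have Ev : nth q t j.+1 = next t (nth q t j) by rewrite next_Qseq_nth ?modn_small // ltnW.
have {IH} := IH (ltnW hj); rewrite Ev.
set u := nth q t j; set v := next t u.
have vY : v \in Y x by rewrite -(mem_Qseq _ q) mem_next mem_Qseq mem_nth_Qseq 1?ltnW.
have back (h : pt -> pt) : involutive h -> next (enum (Y x)) (h v) = v -> v = h u.
  by move=> hK E; rewrite -[v in LHS]hK; congr h; apply: next_inj; rewrite nxt E /v nxt.
rewrite /= !nxt; case: (odd j) => /= IH.
- case: (component_next_mate vY) => [// | /(back _ mK) E].
  by move: (mate_neq_mate u); rewrite -E IH eqxx.
- case: (component_next_mate' vY) => [// | /(back _ m'K) E].
  by move: (mate_neq_mate u); rewrite -E IH eqxx.
Qed.

Lemma mate_even i : (i < #|B x|)%N -> m (nth q t i.*2) = nth q t i.*2.+1.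
Proof.
move=> hi; have h1 : (i.*2.+1 < #|Y x|)%N by rewrite card_component; lia.
have := alternating (ltnW h1); rewrite odd_double /= => ->.
by rewrite next_Qseq_nth ?modn_small // ltnW.
Qed.

Lemma mate'_odd i : (i < #|B x|)%N -> m' (nth q t i.*2.+1) = next t (nth q t i.*2.+1).
Proof.
move=> hi; have h1 : (i.*2.+1 < #|Y x|)%N by rewrite card_component; lia.
by have := alternating h1; rewrite /= odd_double.
Qed.

Lemma index_Qseq_split y : y \in Y x -> exists2 i, (i < #|B x|)%N &
  y = nth q t i.*2 \/ y = nth q t i.*2.+1.
Proof.
move=> yY; have yt : y \in t by rewrite mem_Qseq.
have /ltn_double_split [i hi Ei] : (index y t < #|B x|.*2)%N.
  by rewrite -card_component -(size_Qseq _ q) index_mem.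
by exists i => //; rewrite -(nth_index q yt); case: Ei => ->; auto.
Qed.

Lemma block_pairs0 : B x = pairs0 (B x) q.
Proof.
rewrite /pairs0 cover_block; apply/setP => e; apply/idP/imsetP => [eB | [i _ ->]].
  have := eB; rewrite inE => /andP [eM /subsetP eY].
  have [y ye ->] := matching_edgeP hM eM.
  have [i hi [Ey | Ey]] := index_Qseq_split (eY _ ye); exists (Ordinal hi) => //=.
    by rewrite Ey mate_even.
  by rewrite Ey -(mate_even hi) mK setUC.
rewrite -mate_even //; apply: mate_mem_block; apply: mem_nth_Qseq.
by have := ltn_ord i; rewrite card_component; lia.
Qed.

Lemma pairs1_block : pairs1 (B x) q = [set e in M' | e \subset Y x].
Proof.
rewrite /pairs1 cover_block size_Qseq; apply/setP => e.
apply/imsetP/idP => [[i _ ->] | ]; rewrite inE.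
  have hi := ltn_ord i; have h1 : (i.*2.+1 < #|Y x|)%N by rewrite card_component; lia.
  rewrite -next_Qseq_nth // -mate'_odd // (mate_edge hM').
  by apply/subsetP => z /set2P [->|->]; [|apply: component_g]; apply: mem_nth_Qseq.
case/andP => eM /subsetP eY; have [y ye ->] := matching_edgeP hM' eM.
have yY := eY _ ye.
have odd_start w : w \in Y x -> m' w = next t w ->
    exists2 i : 'I_#|B x|, true &
      [set w; m' w] = [set nth q t i.*2.+1; nth q t (i.*2.+2 %% #|Y x|)].
  move=> wY hw; have [i hi [Ew | Ew]] := index_Qseq_split wY;
    have h1 : (i.*2.+1 < #|Y x|)%N by rewrite card_component; lia.
    case/negP: (mate_neq_mate w); rewrite hw Ew mate_even // next_Qseq_nth 1?ltnW //.
    by rewrite modn_small // eqxx.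
  by exists (Ordinal hi); rewrite //= hw Ew next_Qseq_nth.
case: (component_next_mate' yY); rewrite -(next_Qseq _ q) => E; first exact: odd_start.
by rewrite setUC -{2}(m'K y); apply: odd_start; [apply: component_g | rewrite m'K].
Qed.

End Alternating.

Lemma exists_alternating_start x : exists2 q, q \in Y x & m q = next (Qseq (Y x) q) q.
Proof.
have xY := component_refl m m' x.
case: (component_next_mate xY) => E; first by exists x; rewrite ?next_Qseq.
by exists (m x); [apply: component_f | rewrite next_Qseq E mK].
Qed.

Lemma hull_avoid_outer_edge x e : e \in M -> e \notin B x -> ~~ hull_meets e (Y x).
Proof.
move=> eM eB; apply/negP => /exists_inP [y1 y1Y /exists_inP [y2 y2Y hc]].
have eY z : z \in e -> z \notin Y x.
  by move=> ze; apply: contra eB => zY; rewrite (edge_mate hM eM ze) mate_mem_block.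
have [y _ /orP[] ] := component_crossing_chord mK m'K eY y1Y y2Y hc;
  by apply/negP; apply: edges_noncrossing; rewrite ?eM ?(mate_edge hM) ?(mate_edge hM') ?orbT.
Qed.

Lemma flippable_block x : flippable M (B x).
Proof.
apply/and4P; split; [exact: block_sub | exact: card_block_gt1 | |].
  have [q qY hq] := exists_alternating_start x.
  by apply/exists_inP; exists q; rewrite ?cover_block // -block_pairs0.
apply/forall_inP => e; rewrite inE => /andP[eB eM].
by rewrite cover_block; apply: hull_avoid_outer_edge.
Qed.

Lemma flip_block x : flip (B x) = [set e in M' | e \subset Y x].
Proof.
have [q [qY E0 ->]] := flippable_pairs (flippable_block x).
rewrite cover_block in qY; apply: pairs1_block => //.
have hpos : (0 < #|B x|)%N by apply: ltnW (card_block_gt1 x).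
have : [set q; nth q (Qseq (Y x) q) 1] \in B x.
  rewrite E0 /pairs0 cover_block; apply/imsetP; exists (Ordinal hpos) => //.
  by rewrite /= double0 (nth_Qseq0 qY).
rewrite inE => /andP [/(mate_set2 hM) ->].
by rewrite -[1](@modn_small 1 #|Y x|) -?next_Qseq_nth ?nth_Qseq0 // card_component; lia.
Qed.

Lemma block_eq x y : y \in Y x -> B y = B x.
Proof. by move=> yY; rewrite /component_block (component_eq mK m'K yY). Qed.

Definition component_blocks := [set B x | x : pt].

Lemma partition_component_blocks : partition component_blocks M.
Proof.
apply/and3P; split.
- apply/eqP/setP => e; apply/bigcupP/idP => [[N /imsetP [x _ ->]] | eM].
    by rewrite inE => /andP[].
  have [y ye ->] := matching_edgeP hM eM.
  by exists (B y); [apply: imset_f | apply/mate_mem_block/component_refl].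
- apply/trivIsetP => _ _ /imsetP [x1 _ ->] /imsetP [x2 _ ->].
  apply: contraNT; rewrite -setI_eq0 => /set0Pn [e]; rewrite !inE.
  case/andP => /andP [eM /subsetP e1] /andP [_ /subsetP e2].
  have [y ye _] := matching_edgeP hM eM.
  by rewrite -(block_eq (e1 _ ye)) -(block_eq (e2 _ ye)).
- apply/imsetP => -[x _ E].
  by have := mate_mem_block (component_refl m m' x); rewrite -E inE.
Qed.

Lemma hulls_disjoint_blocks x1 x2 : B x1 != B x2 -> hulls_disjoint (Y x1) (Y x2).
Proof.
move=> neq; have disj z : z \in Y x1 -> z \notin Y x2.
  by move=> z1; apply: contra neq => z2; rewrite -(block_eq z1) -(block_eq z2).
apply/negP => /exists_inP [a aY /exists_inP [b bY /exists_inP [c cY /exists_inP [d dY]]]].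
rewrite crossesC => hc.
have cd1 z : z \in [set c; d] -> z \notin Y x1.
  by case/set2P => ->; apply/negP => /disj; rewrite ?cY ?dY.
have [y yY hy] := component_crossing_chord mK m'K cd1 aY bY hc.
have [h [hMor hY hF]] : exists h : pt -> pt,
    [/\ ([set y; h y] \in M) || ([set y; h y] \in M'), {subset [set y; h y] <= Y x1}
       & crosses [set c; d] [set y; h y]].
  case/orP: hy => hy; [exists m | exists m']; split => //.
  - by rewrite (mate_edge hM).
  - by move=> z /set2P [->|->] //; apply: component_f.
  - by rewrite (mate_edge hM') orbT.
  - by move=> z /set2P [->|->] //; apply: component_g.
have F2 z : z \in [set y; h y] -> z \notin Y x2 by move/hY/disj.
rewrite crossesC in hF.
have [z _ /orP[]] := component_crossing_chord mK m'K F2 cY dY hF;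
  by apply/negP; apply: edges_noncrossing hMor _; rewrite ?(mate_edge hM) ?(mate_edge hM') ?orbT.
Qed.

Lemma flip_partition_component_blocks : flip_partition M M' component_blocks.
Proof.
split; first exact: partition_component_blocks.
- by move=> _ /imsetP [x _ ->]; apply: flippable_block.
- move=> _ _ /imsetP [x1 _ ->] /imsetP [x2 _ ->] neq.
  by rewrite !cover_block; apply: hulls_disjoint_blocks.
apply/setP => f; apply/idP/bigcupP => [fM' | [_ /imsetP [x _ ->]]].
  have [y yf Ef] := matching_edgeP hM' fM'.
  exists (B y); first exact: imset_f.
  rewrite flip_block inE fM' Ef; apply/subsetP => z /set2P [->|->].
    exact: component_refl.
  exact/component_g/component_refl.
by rewrite flip_block inE => /andP[].
Qed.

End DisjointCompatible.

Section Uniqueness.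
Variables (n : nat) (M M' : {set {set 'I_n}}) (P : {set {set {set 'I_n}}}).
Hypotheses (hM : matching M) (hM' : matching M') (hFP : flip_partition M M' P).
Local Notation m := (mate M).
Local Notation m' := (mate M').
Local Notation Y x := (component m m' x).

Lemma cover_block_mate_closed N z : N \in P -> z \in cover N ->
  m z \in cover N /\ m' z \in cover N.
Proof.
move=> NP zN; have [_ [_ _ _ NM _]] := flip_partition_block hM hFP NP.
split.
  case/bigcupP: zN => e eN ze; apply/bigcupP; exists e => //.
  exact: (mate_in hM (subsetP NM _ eN) ze).
have [N' N'P fN'] := flip_partition_edge hFP (mate_edge hM' z).
have [v vN' Ef] := flip_edge_chord hM hFP N'P fN'.
have sub : [set z; m' z] \subset cover N'.
  by rewrite Ef; apply/subsetP => u /set2P [->|->] //; rewrite -mem_enum mem_next mem_enum.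
have hP : partition P M by case: hFP.
by rewrite (partition_block_eq hM hP NP N'P zN (subsetP sub _ (set21 _ _))) (subsetP sub) ?set22.
Qed.

Lemma cover_block_sub_component N y : N \in P -> y \in cover N -> cover N \subset Y y.
Proof.
move=> NP yN; have [q [qY E0 E1 NM [_ hsz]]] := flip_partition_block hM hFP NP.
set t := Qseq (cover N) q.
have hM'flip : flip N \subset M'.
  by case: hFP => _ _ _ ->; apply: bigcup_sup.
have step j : (j < #|cover N|)%N -> next t (nth q t j) \in [set m (nth q t j); m' (nth q t j)].
  move=> hj; rewrite hsz in hj; have [i hi [-> | ->]] := ltn_double_split hj.
    have eN : [set nth q t i.*2; nth q t i.*2.+1] \in N.
      by rewrite E0 /pairs0; apply/imsetP; exists (Ordinal hi).
    rewrite (mate_set2 hM (subsetP NM _ eN)).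
    by case: (nth_Qseq_pair q hsz hi) => _ <-; rewrite set21.
  have fN : [set nth q t i.*2.+1; nth q t (i.*2.+2 %% #|cover N|)] \in M'.
    by apply: (subsetP hM'flip); rewrite E1 /pairs1 size_Qseq; apply/imsetP; exists (Ordinal hi).
  by rewrite (mate_set2 hM' fN) next_Qseq_nth ?set22 // hsz; lia.
have reach j : (j < #|cover N|)%N -> nth q t j \in Y q.
  elim: j => [|j IH] hj; first by rewrite nth_Qseq0 // component_refl.
  have := step j (ltnW hj); rewrite next_Qseq_nth 1?ltnW // modn_small //.
  by case/set2P => ->; [apply: component_f | apply: component_g]; apply: IH; apply: ltnW.
have sub : cover N \subset Y q.
  apply/subsetP => z zN; have zt : z \in t by rewrite mem_Qseq.
  by rewrite -(nth_index q zt); apply: reach; rewrite -(size_Qseq _ q) index_mem.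
by rewrite (component_eq (mateK hM) (mateK hM') (subsetP sub _ yN)).
Qed.

Lemma component_cover_block N y : N \in P -> y \in cover N -> Y y = cover N.
Proof.
move=> NP yN; apply/eqP; rewrite eqEsubset cover_block_sub_component // andbT.
by apply: component_sub => // z zN _; apply: cover_block_mate_closed.
Qed.

Lemma flip_partitionE : P = component_blocks M M'.
Proof.
have hP : partition P M by case: hFP.
have blockE N y : N \in P -> y \in cover N -> N = component_block M M' y.
  move=> NP yN; rewrite /component_block (component_cover_block NP yN).
  exact: (partition_blockE hM hP NP).
apply/setP => N; apply/idP/imsetP => [NP | [x _ ->]].
  have /set0Pn [e eN] : N != set0 by apply: contraTneq NP => ->; case/and3P: hP.
  have [_ [_ _ _ NM _]] := flip_partition_block hM hFP NP.
  have [y ye _] := matching_edgeP hM (subsetP NM _ eN).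
  by exists y => //; apply: blockE NP _; apply/bigcupP; exists e.
have /and3P [/eqP covP _ _] := hP.
have /bigcupP [N' N'P xN'] : [set x; m x] \in cover P by rewrite covP mate_edge.
by rewrite -(blockE N' x) //; apply/bigcupP; exists [set x; m x]; rewrite ?set21.
Qed.

End Uniqueness.

Theorem mainTheorem5 (k : nat) (hk : (1 <= k)%N)
    (M M' : {set {set 'I_(k.*2)}}) :
  matching M -> matching M' ->
  (disjoint_compatible M M' <-> exists P, flip_partition M M' P) /\
  (forall P1 P2, flip_partition M M' P1 -> flip_partition M M' P2 -> P1 = P2).
Proof.
move=> hM hM'; split; first split.
- by move=> hdc; exists (component_blocks M M'); apply: flip_partition_component_blocks.
- by case=> P hP; apply: flip_partition_disjoint_compatible hM hP.
- by move=> P1 P2 h1 h2; rewrite (flip_partitionE hM hM' h1) (flip_partitionE hM hM' h2).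
Qed.
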